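(* Let $X$ be a finite-dimensional real Hilbert space, $Y$ a real Hilbert space, and $\mathsf{K_h}: X \to Y$ a linear operator. Let $\{\phi_1,\dots,\phi_n\}$ be an orthonormal basis of $X$ such that $\mathsf{K_h}\phi_i \neq c\,\mathsf{K_h}\phi_j$ for all $i \neq j$ and all $c \in \mathbb{R}$. Define the linear operator $\mathsf{W}: X\to X$ by $\mathsf{W}\phi_i = \|\mathsf{P}\phi_i\|_X\,\phi_i$ for $i=1,\dots,n$, where $\mathsf{P}$ is the orthogonal projection of $X$ onto $\mathcal{N}(\mathsf{K_h})^\perp$. (Then $\|\mathsf{P}\phi_i\|_X > 0$ for all $i$, so $\mathsf{W}$ is invertible.) Fix $j \in \{1,\dots,n\}$ and let $x_j^*$ be the minimum norm least squares solution of $\mathsf{K_h}x = \mathsf{K_h}\phi_j$. Write $\mathsf{W}^{-1}x_j^* = \sum_{i=1}^n c_i \phi_i$. Then $j$ is the unique index maximizing $c_i$, i.e. $c_j > c_i$ for all $i\neq j$.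
   Context: $\mathcal{N}(\mathsf{K_h})$ is the nullspace of $\mathsf{K_h}$ and $\mathcal{N}(\mathsf{K_h})^\perp$ its orthogonal complement in $X$. The minimum norm least squares solution of $\mathsf{K_h}x=b$ is the element of smallest norm among the minimizers of $\|\mathsf{K_h}x-b\|_Y$, i.e. $\mathsf{K_h}^\dagger b$ with $\mathsf{K_h}^\dagger$ the Moore–Penrose inverse. *)

From mathcomp Require Import all_boot all_order all_algebra.
From mathcomp Require Import reals.
Set Implicit Arguments. Unset Strict Implicit. Unset Printing Implicit Defensive.
Import Order.TTheory GRing.Theory Num.Theory.
Local Open Scope ring_scope.

Definition is_inner_product (R : realType) (V : lmodType R) (ip : V -> V -> R) : Prop :=
  [/\ (forall x y, ip x y = ip y x),
      (forall a x y z, ip (a *: x + y) z = a * ip x z + ip y z),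
      (forall x, 0 <= ip x x) &
      (forall x, ip x x = 0 -> x = 0)].

Definition ipnorm (R : realType) (V : lmodType R) (ip : V -> V -> R) (x : V) : R :=
  Num.sqrt (ip x x).

Definition ip_complete (R : realType) (V : lmodType R) (ip : V -> V -> R) : Prop :=
  forall u : nat -> V,
    (forall e : R, 0 < e -> exists N : nat, forall m n : nat, (N <= m)%N -> (N <= n)%N ->
        ipnorm ip (u m - u n) < e) ->
    exists l : V, forall e : R, 0 < e -> exists N : nat, forall n : nat, (N <= n)%N ->
        ipnorm ip (u n - l) < e.

Definition is_hilbert (R : realType) (V : lmodType R) (ip : V -> V -> R) : Prop :=
  is_inner_product ip /\ ip_complete ip.

Definition nullspace (R : realType) (X Y : lmodType R) (K : X -> Y) (x : X) : Prop :=
  K x = 0.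

Definition orth_compl (R : realType) (X : lmodType R) (ipX : X -> X -> R)
  (S : X -> Prop) (x : X) : Prop :=
  forall z, S z -> ipX x z = 0.

Definition is_orth_proj (R : realType) (X : lmodType R) (ipX : X -> X -> R)
  (M : X -> Prop) (P : X -> X) : Prop :=
  forall x, M (P x) /\ (forall z, M z -> ipX (x - P x) z = 0).

Definition is_orthonormal_basis (R : realType) (X : lmodType R) (ipX : X -> X -> R)
  (n : nat) (phi : 'I_n -> X) : Prop :=
  (forall i j : 'I_n, ipX (phi i) (phi j) = (i == j)%:R) /\
  (forall x : X, exists c : 'I_n -> R, x = \sum_(i < n) c i *: phi i).

Definition is_ls_solution (R : realType) (X Y : lmodType R) (ipY : Y -> Y -> R)
  (K : X -> Y) (b : Y) (x : X) : Prop :=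
  forall z : X, ipnorm ipY (K x - b) <= ipnorm ipY (K z - b).

Definition is_min_norm_ls_solution (R : realType) (X Y : lmodType R)
  (ipX : X -> X -> R) (ipY : Y -> Y -> R) (K : X -> Y) (b : Y) (x : X) : Prop :=
  is_ls_solution ipY K b x /\
  (forall z : X, is_ls_solution ipY K b z -> ipnorm ipX x <= ipnorm ipX z).

(* Let M = N(K)^perp and P the orthogonal projection onto M.  The proof runs:
   1. With a finite orthonormal basis every functional z |-> <y, K z> has a
      Riesz representer (the adjoint K^* y), which lies in M; hence
      v - P v, being orthogonal to M, is killed by K, i.e. K (P v) = K v.
   2. Consequently P b is an exact solution of K x = K b and, by Pythagoras,
      the minimum norm least squares solution is x* = P phi_j.
   3. Writing x* = W (sum c_i phi_i) and reading off coordinates gives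
      c_i ||P phi_i|| = <P phi_j, P phi_i>, in particular c_j = ||P phi_j||.
   4. The hypothesis K phi_i <> c K phi_k forces P phi_i and P phi_j to be
      non-collinear (and nonzero), so the strict Cauchy-Schwarz inequality
      gives c_i ||P phi_i|| < ||P phi_j|| ||P phi_i||, i.e. c_i < c_j. *)

From HB Require Import structures.
From mathcomp Require Import all_boot all_order all_algebra.
From mathcomp Require Import reals.
From mathcomp Require Import ring lra.
Import Order.TTheory GRing.Theory Num.Theory.
Set Implicit Arguments. Unset Strict Implicit.
Local Open Scope ring_scope.

Lemma linear_combination (R : pzRingType) (U V : lmodType R) (W : U -> V)
    (n : nat) (c : 'I_n -> R) (v : 'I_n -> U) :
  linear W -> W (\sum_(i < n) c i *: v i) = \sum_(i < n) c i *: W (v i).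
Proof.
move=> linW.
pose Wl : {linear U -> V} := HB.pack W (GRing.isLinear.Build R U V *:%R W linW).
by rewrite -[W]/(Wl : U -> V) linear_sum; apply: eq_bigr => i _; rewrite linearZ.
Qed.

Section InnerProduct.
Variables (R : realType) (V : lmodType R) (ip : V -> V -> R).
Hypothesis hip : is_inner_product ip.

Lemma ip_sym x y : ip x y = ip y x. Proof. by case: hip. Qed.
Lemma ip_ge0 x : 0 <= ip x x. Proof. by case: hip. Qed.
Lemma ip_eq0 x : ip x x = 0 -> x = 0. Proof. by case: hip => _ _ _; apply. Qed.

Lemma ip0l z : ip 0 z = 0.
Proof.
case: hip => _ lin _ _; have := lin 1 0 0 z.
rewrite scale1r addr0 mul1r => h.
by apply: (@addrI _ (ip 0 z)); rewrite addr0 -h.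
Qed.

Lemma ipDl x y z : ip (x + y) z = ip x z + ip y z.
Proof. by case: hip => _ lin _ _; have := lin 1 x y z; rewrite scale1r mul1r. Qed.

Lemma ipZl a x z : ip (a *: x) z = a * ip x z.
Proof. by case: hip => _ lin _ _; have := lin a x 0 z; rewrite addr0 ip0l addr0. Qed.

Lemma ipBl x y z : ip (x - y) z = ip x z - ip y z.
Proof. by rewrite ipDl -scaleN1r ipZl mulN1r. Qed.

Lemma ip0r z : ip z 0 = 0. Proof. by rewrite ip_sym ip0l. Qed.
Lemma ipZr a x z : ip z (a *: x) = a * ip z x.
Proof. by rewrite !(ip_sym z) ipZl. Qed.
Lemma ipBr x y z : ip z (x - y) = ip z x - ip z y.
Proof. by rewrite !(ip_sym z) ipBl. Qed.

Lemma ip_suml (I : Type) (r : seq I) (F : I -> V) z :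
  ip (\sum_(i <- r) F i) z = \sum_(i <- r) ip (F i) z.
Proof. exact: (big_morph (ip^~ z) (fun x y => ipDl x y z) (ip0l z)). Qed.

Lemma ip_sumr (I : Type) (r : seq I) (F : I -> V) z :
  ip z (\sum_(i <- r) F i) = \sum_(i <- r) ip z (F i).
Proof. by rewrite ip_sym ip_suml; apply: eq_bigr => i _; apply: ip_sym. Qed.

Lemma ipnorm_sqr x : ipnorm ip x ^+ 2 = ip x x.
Proof. by rewrite sqr_sqrtr ?ip_ge0. Qed.

Lemma ipnorm_le0 x : ipnorm ip x <= 0 -> x = 0.
Proof.
move=> h; apply: ip_eq0; apply/eqP; rewrite eq_le ip_ge0 andbT -sqrtr_eq0.
by rewrite eq_le h sqrtr_ge0.
Qed.

Lemma ipnorm_gt0 x : x != 0 -> 0 < ipnorm ip x.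
Proof.
move=> xn0; rewrite ltNge; apply: contra xn0 => /ipnorm_le0 ->.
exact: eqxx.
Qed.

Lemma ip_add_orth p d : ip p d = 0 -> ip (p + d) (p + d) = ip p p + ip d d.
Proof.
move=> pd; rewrite ipDl !(ip_sym _ (p + d)) !ipDl (ip_sym d p) pd.
by rewrite add0r addr0.
Qed.

(* Strict Cauchy-Schwarz: equality <x, y> = ||x|| ||y|| forces y to be a
   multiple of x.  Indeed ||b x - a y||^2 = 2 a b (a b - <x, y>) with
   a = ||x||, b = ||y||. *)
Lemma cauchy_schwarz_strict x y :
  x != 0 -> (forall t : R, y != t *: x) -> ip x y < ipnorm ip x * ipnorm ip y.
Proof.
move=> xn0 ncol; have yn0 : y != 0 by rewrite -(scale0r x); apply: ncol.
set a := ipnorm ip x; set b := ipnorm ip y.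
have apos : 0 < a := ipnorm_gt0 xn0; have bpos : 0 < b := ipnorm_gt0 yn0.
rewrite ltNge; apply/negP => hge.
have gap : ip (b *: x - a *: y) (b *: x - a *: y) <= 0.
  rewrite !(ipBl, ipBr, ipZl, ipZr) (ip_sym y x) -!ipnorm_sqr -/a -/b.
  have : 0 <= a * b * (ip x y - a * b) by rewrite mulr_ge0 ?subr_ge0 // mulr_ge0 // ltW.
  nra.
have /eqP : b *: x - a *: y = 0.
  by apply: ip_eq0; apply/eqP; rewrite eq_le gap ip_ge0.
rewrite subr_eq0 => /eqP bxay; apply/negP: (ncol (b / a)); apply/negPn/eqP.
by rewrite mulrC -scalerA bxay scalerA mulVf ?scale1r // gt_eqF.
Qed.

Lemma orthonormal_coord (n : nat) (phi : 'I_n -> V) (u : 'I_n -> R) k :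
  (forall i j : 'I_n, ip (phi i) (phi j) = (i == j)%:R) ->
  ip (phi k) (\sum_(l < n) u l *: phi l) = u k.
Proof.
move=> orth; rewrite ip_sumr (bigD1 k) //= big1 ?addr0.
  by rewrite ipZr orth eqxx mulr1.
by move=> l lk; rewrite ipZr orth eq_sym (negbTE lk) mulr0.
Qed.

Lemma orth_proj_ip (M : V -> Prop) (P : V -> V) v x :
  is_orth_proj ip M P -> M x -> ip v x = ip (P v) x.
Proof.
move=> hP Mx; have [_ /(_ x Mx)] := hP v.
by rewrite ipBl => /eqP; rewrite subr_eq0 => /eqP.
Qed.

End InnerProduct.

Section Adjoint.
Variables (R : realType) (X Y : lmodType R).
Variables (ipX : X -> X -> R) (ipY : Y -> Y -> R).
Hypotheses (hX : is_inner_product ipX) (hY : is_inner_product ipY).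
Variables (n : nat) (phi : 'I_n -> X) (K : {linear X -> Y}).
Hypothesis hphi : is_orthonormal_basis ipX phi.

Definition adjoint (y : Y) : X := \sum_(l < n) ipY y (K (phi l)) *: phi l.

Lemma adjointP y z : ipX (adjoint y) z = ipY y (K z).
Proof.
have [orth basis] := hphi; have [u ->] := basis z.
rewrite ip_suml // linear_sum ip_sumr //; apply: eq_bigr => l _.
by rewrite ipZl // orthonormal_coord // linearZ ipZr // mulrC.
Qed.

Lemma adjoint_orth_null y : orth_compl ipX (nullspace K) (adjoint y).
Proof. by move=> z Kz; rewrite adjointP Kz ip0r. Qed.

(* Projecting onto N(K)^perp does not change the image under K: K(v - P v)
   has zero norm since <K(v - P v), K(v - P v)> = <v - P v, K^* K(v - P v)>. *)
Lemma K_orth_proj (P : X -> X) v :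
  is_orth_proj ipX (orth_compl ipX (nullspace K)) P -> K (P v) = K v.
Proof.
move=> hP; have [_ orthv] := hP v.
have := orthv _ (adjoint_orth_null (K (v - P v))).
rewrite ip_sym // adjointP => /(ip_eq0 hY)/eqP.
by rewrite linearB subr_eq0 eq_sym => /eqP.
Qed.

End Adjoint.

(* If K factors through P, the minimum norm least squares solution of
   K x = K b is P b: P b solves exactly, any exact solution x differs from it
   by an element of N(K), orthogonal to P b, and Pythagoras concludes. *)
Lemma min_norm_ls_solution_proj (R : realType) (X Y : lmodType R)
    (ipX : X -> X -> R) (ipY : Y -> Y -> R) (K : {linear X -> Y})
    (P : X -> X) (b x : X) :
  is_inner_product ipX -> is_inner_product ipY ->
  is_orth_proj ipX (orth_compl ipX (nullspace K)) P ->
  (forall v, K (P v) = K v) ->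
  is_min_norm_ls_solution ipX ipY K (K b) x -> x = P b.
Proof.
move=> hX hY hP KP [ls minx].
have Kx : K x = K b.
  have := ls b; rewrite subrr /ipnorm ip0l // sqrtr0 => /(ipnorm_le0 hY) /eqP.
  by rewrite subr_eq0 => /eqP.
have lsPb : is_ls_solution ipY K (K b) (P b).
  by move=> z; rewrite KP subrr /ipnorm ip0l // sqrtr0 sqrtr_ge0.
have [PbM _] := hP b.
have orth : ipX (P b) (x - P b) = 0.
  by apply: PbM; rewrite /nullspace linearB Kx KP subrr.
have pyth : ipX x x = ipX (P b) (P b) + ipX (x - P b) (x - P b).
  by rewrite -ip_add_orth // addrC subrK.
have := minx _ lsPb; rewrite /ipnorm ler_sqrt ?ip_ge0 // pyth => hle.
have : ipX (x - P b) (x - P b) = 0 by have := ip_ge0 hX (x - P b); lra.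
by move/(ip_eq0 hX)/eqP; rewrite subr_eq0 => /eqP.
Qed.

Lemma noncollinear_proj (R : realType) (X Y : lmodType R) (K : {linear X -> Y})
    (P : X -> X) (u v : X) (t : R) :
  (forall w, K (P w) = K w) -> K u <> t *: K v -> P u != t *: P v.
Proof.
by move=> KP Kuv; apply/eqP => Puv; apply: Kuv; rewrite -KP Puv linearZ KP.
Qed.

Theorem theorem1 (R : realType) (X Y : lmodType R)
  (ipX : X -> X -> R) (ipY : Y -> Y -> R)
  (n : nat) (phi : 'I_n -> X)
  (K : {linear X -> Y}) (P W : X -> X) (j : 'I_n) (xstar : X) :
  is_hilbert ipX ->
  is_hilbert ipY ->
  is_orthonormal_basis ipX phi ->
  (forall (i k : 'I_n) (c : R), i != k -> K (phi i) <> c *: K (phi k)) ->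
  is_orth_proj ipX (orth_compl ipX (nullspace K)) P ->
  linear W ->
  (forall i : 'I_n, W (phi i) = ipnorm ipX (P (phi i)) *: phi i) ->
  is_min_norm_ls_solution ipX ipY K (K (phi j)) xstar ->
  forall c : 'I_n -> R, W (\sum_(i < n) c i *: phi i) = xstar ->
  forall i : 'I_n, i != j -> c i < c j.
Proof.
move=> [hX _] [hY _] hphi hK hP linW hW minx c hc i ij.
have KP v : K (P v) = K v := K_orth_proj hX hY hphi v hP.
have xP : xstar = P (phi j) := min_norm_ls_solution_proj hX hY hP KP minx.
have xM : orth_compl ipX (nullspace K) xstar by rewrite xP; case: (hP (phi j)).
have coord k : c k * ipnorm ipX (P (phi k)) = ipX (P (phi j)) (P (phi k)).
  have [orth _] := hphi.
  rewrite -(orthonormal_coord hX (fun l => c l * ipnorm ipX (P (phi l))) k orth).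
  under eq_bigr => l _ do rewrite -scalerA -hW.
  rewrite -linear_combination // hc (orth_proj_ip hX _ hP xM) ip_sym // xP //.
have nPj : P (phi j) != 0.
  rewrite -(scale0r (P (phi i))).
  by apply: noncollinear_proj KP (hK j i 0 _); rewrite eq_sym.
have nPi : P (phi i) != 0.
  by rewrite -(scale0r (P (phi j))); apply: noncollinear_proj KP (hK i j 0 ij).
have cj : c j = ipnorm ipX (P (phi j)).
  apply: (mulIf (lt0r_neq0 (ipnorm_gt0 hX nPj))).
  by rewrite coord -ipnorm_sqr // expr2.
have ci : c i * ipnorm ipX (P (phi i))
          < ipnorm ipX (P (phi j)) * ipnorm ipX (P (phi i)).
  rewrite coord; apply: cauchy_schwarz_strict => // t.
  exact: noncollinear_proj KP (hK i j t ij).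
by rewrite cj -(ltr_pM2r (ipnorm_gt0 hX nPi)).
Qed.
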